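(* Let $M$ be a $3$-connected simple matroid with $r(M)\ge 4$, and let $x_1,\dots,x_n,y_1,\dots,y_n$ ($n\ge 3$) be a carambole of $M$ with filament $L=\{y_1,\dots,y_n\}$ and hull $X=\{x_1,\dots,x_n\}$. Then $r^*_M(X)=2$, and $|X|=|L|$ (i.e. $x_1,\dots,x_n$ are distinct).
   Context: A line of $M$ is a rank-$2$ set. For $n\ge3$, a sequence $x_1,\dots,x_n,y_1,\dots,y_n$ of elements of $M$ is a carambole of $M$ if $L:=\{y_1,\dots,y_n\}$ is a line of $M$ with $n$ distinct elements such that $\mathrm{si}(M/L)$ is $3$-connected, and, for each $i$, $(L-y_i)\cup x_i$ is a cocircuit of $M$. $L$ is the filament and $X:=\{x_1,\dots,x_n\}$ the hull of the carambole. $r^*_M$ denotes the corank (rank function of the dual $M^*$). *)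

(* Matroids on a finite type T, given by a ground set E and a
   rank function r (only its values on subsets of E matter). *)
From mathcomp Require Import all_boot.
Set Implicit Arguments. Unset Strict Implicit. Unset Printing Implicit Defensive.

Section Matroids.
Variable T : finType.
Implicit Types (E A B C D L S : {set T}) (r : {set T} -> nat).

Definition is_matroid E r : Prop :=
  [/\ forall A, A \subset E -> r A <= #|A|,
      forall A B, A \subset B -> B \subset E -> r A <= r B &
      forall A B, A \subset E -> B \subset E ->
        r (A :|: B) + r (A :&: B) <= r A + r B].

Definition dual_rank E r : {set T} -> nat :=
  fun A => #|A| + r (E :\: A) - r E.

Definition circuit E r C : Prop :=
  [/\ C \subset E, r C < #|C| & forall D, D \proper C -> r D = #|D|].

Definition cocircuit E r C : Prop := circuit E (dual_rank E r) C.

Definition simple E r : Prop :=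
  forall A, A \subset E -> #|A| <= 2 -> r A = #|A|.

Definition conn E r A : nat := r A + r (E :\: A) - r E.

Definition separation E r k A : Prop :=
  [/\ A \subset E, k <= #|A|, k <= #|E :\: A| & conn E r A < k].

Definition n_connected E r n : Prop :=
  forall k A, 1 <= k < n -> ~ separation E r k A.

Definition three_connected E r : Prop := n_connected E r 3.

Definition contr_ground E L : {set T} := E :\: L.
Definition contr_rank r L : {set T} -> nat := fun A => r (A :|: L) - r L.

Definition parallel r x y : bool :=
  [&& x != y, r [set x] == 1, r [set y] == 1 & r [set x; y] == 1].

(* Simplification si(M): the restriction of M to the set obtained by deleting
   all loops and keeping, in each parallel class, only the element of least
   enum_rank.  (Any simplification is isomorphic to this one.) *)
Definition si_ground E r : {set T} :=
  [set x in E | (0 < r [set x]) &&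
     [forall y in E, (enum_rank y < enum_rank x)%N ==> ~~ parallel r y x]].

Definition carambole E r n (x y : 'I_n -> T) : Prop :=
  let L := [set y i | i : 'I_n] in
  [/\ 3 <= n,
      (forall i, x i \in E) /\ (forall i, y i \in E),
      r L = 2 /\ injective y,
      three_connected (si_ground (contr_ground E L) (contr_rank r L))
                      (contr_rank r L) &
      forall i, cocircuit E r ((L :\ y i) :|: [set x i])].

End Matroids.

From mathcomp Require Import all_boot.
From mathcomp Require Import zify.

Set Implicit Arguments. Unset Strict Implicit. Unset Printing Implicit Defensive.

(* In a 3-connected matroid of rank at least 4, the complement of any set of
   rank at most 2 with at least two elements is spanning; in particular so is
   [E - L].  Hence no cocircuit [C_i = (L - y_i) + x_i] lies inside [L], so
   [x_i] is outside [L], and [x_i = x_j] for [i <> j] is impossible, since by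
   submodularity the complement of [C_i u C_j] would have rank at most
   [r M - 2] although it spans [E - L] up to one element.  As [x_i] is not in
   the closure of [E - C_i], putting back the [n] elements of [X] one at a
   time into [E - (L u X)] raises the rank each time, so
   [r (E - X) <= r (E - (L u X)) + 2 <= r M - n + 2], i.e. [r^* X <= 2].
   Conversely, for two elements [P] of [X] the complement of [P] spans, so
   [r M <= r (E - X) + (n - 2)], i.e. [r^* X >= 2]. *)

Section Matroid.
Variables (T : finType) (E : {set T}) (r : {set T} -> nat).
Implicit Types (A B C L S U Z : {set T}).
Hypothesis hM : is_matroid E r.

Lemma rank_le_card A : A \subset E -> r A <= #|A|.
Proof. by case: hM => h _ _; apply: h. Qed.

Lemma rank_mono A B : A \subset B -> B \subset E -> r A <= r B.
Proof. by case: hM => _ h _; apply: h. Qed.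

Lemma rank_submod A B : A \subset E -> B \subset E ->
  r (A :|: B) + r (A :&: B) <= r A + r B.
Proof. by case: hM => _ _ h; apply: h. Qed.

Lemma rank_subadd A B : A \subset E -> B \subset E -> r (A :|: B) <= r A + r B.
Proof. by move=> hA hB; have := rank_submod hA hB; lia. Qed.

Lemma rank_setU_card S A : S \subset E -> A \subset E -> r (S :|: A) <= r S + #|A|.
Proof. by move=> hS hA; have := rank_subadd hS hA; have := rank_le_card hA; lia. Qed.

Lemma cocircuit_rank_compl_lt C : cocircuit E r C -> r (E :\: C) < r E.
Proof. by case=> _ hC _; move: hC; rewrite /dual_rank; lia. Qed.

Lemma cocircuit_rank_compl_setD1 C e :
  cocircuit E r C -> e \in C -> r (E :\: (C :\ e)) = r E.
Proof.
case=> _ _ hmin eC; have := hmin _ (properD1 eC); rewrite /dual_rank.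
have [/cards0_eq -> _ | pos] := posnP #|C :\ e|; first by rewrite setD0.
by have := rank_mono (subsetDl E (C :\ e)) (subxx E); lia.
Qed.

Lemma cocircuit_not_subset_coindep C L :
  cocircuit E r C -> r (E :\: L) = r E -> ~~ (C \subset L).
Proof.
move=> hC hL; apply/negP => CL; have := cocircuit_rank_compl_lt hC.
by rewrite -hL ltnNge rank_mono ?setDS ?subsetDl.
Qed.

(* [e] is a coloop of the restriction to [E :\: (C :\ e)]. *)
Lemma cocircuit_rank_setU1_gt C e U :
  cocircuit E r C -> e \in C -> U \subset E :\: C -> r U < r (e |: U).
Proof.
move=> hC eC hU; have [CE _ _] := hC.
have eE : e \in E := subsetP CE e eC.
have hUE : U \subset E := subset_trans hU (subsetDl E C).
have heUE : e |: U \subset E by rewrite subUset sub1set eE.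
have := rank_submod (subsetDl E C) heUE.
have -> : (E :\: C) :|: (e |: U) = E :\: (C :\ e).
  apply/setP => z; rewrite !inE; have := subsetP hU z; rewrite !inE.
  case: (z =P e) => [-> _ | _ /=]; first by rewrite eC eE orbT.
  by case: (z \in U) => [/(_ isT) -> | _]; rewrite ?orbT ?orbF.
have hI : r U <= r ((E :\: C) :&: (e |: U)).
  apply: rank_mono; first by rewrite subsetI hU subsetUr.
  exact: subset_trans (subsetIl _ _) (subsetDl E C).
rewrite cocircuit_rank_compl_setD1 //; have := cocircuit_rank_compl_lt hC; lia.
Qed.

Lemma cocircuits_rank_compl_setU C D e :
  cocircuit E r C -> cocircuit E r D -> e \in C -> e \notin D ->
  r (E :\: (C :|: D)) + 2 <= r E.
Proof.
move=> hC hD eC eD; have [CE _ _] := hC.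
have hU : E :\: (C :|: D) \subset E :\: C by rewrite setDS ?subsetUl.
have := cocircuit_rank_setU1_gt hC eC hU.
have : r (e |: (E :\: (C :|: D))) <= r (E :\: D).
  rewrite rank_mono ?subsetDl // subUset sub1set !inE eD (subsetP CE) //=.
  by rewrite setDS ?subsetUr.
by have := cocircuit_rank_compl_lt hD; lia.
Qed.

Lemma three_connected_rank_compl A :
  three_connected E r -> 4 <= r E -> A \subset E -> 2 <= #|A| -> r A <= 2 ->
  r (E :\: A) = r E.
Proof.
move=> h3 hR hA hA2 hrA.
have hUA : A :|: E :\: A = E.
  by apply/setP => z; rewrite !inE; case: (boolP (z \in A)) => // /(subsetP hA).
have hE : r E <= r A + r (E :\: A) by rewrite -{1}hUA rank_subadd ?subsetDl.
have := rank_le_card (subsetDl E A) => hcard.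
have hconn : ~ conn E r A < 2 by move=> hc; apply: (h3 2 A) => //; split => //; lia.
by have := rank_mono (subsetDl E A) (subxx E); rewrite /conn in hconn; lia.
Qed.

Lemma rank_compl_setU_add_card L Z :
  r (E :\: L) = r E ->
  (forall z, z \in Z -> exists2 C, cocircuit E r C & z \in C /\ C \subset z |: L) ->
  r (E :\: (L :|: Z)) + #|Z| <= r E.
Proof.
move=> hL; have [k] := ubnP #|Z|; elim: k Z => // k IH Z hZk hZ.
have [-> | [z zZ]] := set_0Vmem Z; first by rewrite setU0 cards0 addn0 hL.
have [C hC [zC CzL]] := hZ z zZ; have [CE _ _] := hC.
have zL : z \notin L.
  apply/negP => zL; move: (cocircuit_not_subset_coindep hC hL).
  by rewrite (subset_trans CzL) // subUset sub1set zL subxx.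
have hIH : r (E :\: (L :|: Z :\ z)) + #|Z :\ z| <= r E.
  apply: IH => [|u /setD1P [_ uZ]]; last exact: hZ.
  by rewrite (cardsD1 z Z) zZ in hZk.
have hU : E :\: (L :|: Z) \subset E :\: C.
  by rewrite setDS // (subset_trans CzL) // setUC setUS // sub1set.
have := cocircuit_rank_setU1_gt hC zC hU.
have : r (z |: E :\: (L :|: Z)) <= r (E :\: (L :|: Z :\ z)).
  rewrite rank_mono ?subsetDl // subUset sub1set !inE eqxx (negPf zL) (subsetP CE) //=.
  by rewrite setDS // setUS // subsetDl.
by move: hIH; rewrite (cardsD1 z Z) zZ; lia.
Qed.

End Matroid.

Section Carambole.
Variables (T : finType) (E : {set T}) (r : {set T} -> nat) (n : nat) (x y : 'I_n -> T).
Hypotheses (hM : is_matroid E r) (h3 : three_connected E r) (hR : 4 <= r E).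
Hypotheses (hn : 3 <= n) (hyE : forall i, y i \in E) (yinj : injective y).
Local Notation L := [set y i | i : 'I_n].
Local Notation X := [set x i | i : 'I_n].
Local Notation C i := (L :\ y i :|: [set x i]).
Hypotheses (hL : r L = 2) (hC : forall i, cocircuit E r (C i)).

Lemma card_line : #|L| = n.
Proof. by rewrite card_imset // card_ord. Qed.

Lemma line_sub : L \subset E.
Proof. by apply/subsetP => _ /imsetP [i _ ->]. Qed.

Lemma hull_sub : X \subset E.
Proof.
apply/subsetP => _ /imsetP [i _ ->]; have [CE _ _] := hC i.
by apply: (subsetP CE); rewrite !inE eqxx orbT.
Qed.

Lemma cocircuit_sub_hull_line i : C i \subset x i |: L.
Proof. by rewrite setUC setUS // subsetDl. Qed.

Lemma rank_compl_line : r (E :\: L) = r E.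
Proof.
by rewrite three_connected_rank_compl ?line_sub ?hL ?card_line // (leq_trans _ hn).
Qed.

Lemma hull_notin_line i : x i \notin L.
Proof.
apply/negP => xL; move: (cocircuit_not_subset_coindep hM (hC i) rank_compl_line).
by rewrite subUset subsetDl sub1set xL.
Qed.

Lemma hull_inj : injective x.
Proof.
move=> i j xij; apply/eqP; apply: contraT => nij.
have yjCi : y j \in C i by rewrite !inE (inj_eq yinj) eq_sym nij imset_f.
have yjCj : y j \notin C j.
  by rewrite !inE eqxx /=; apply: contra (hull_notin_line j) => /eqP <-; apply: imset_f.
have := cocircuits_rank_compl_setU hM (hC i) (hC j) yjCi yjCj.
have hCij : C i :|: C j \subset x i |: L.
  by rewrite subUset cocircuit_sub_hull_line xij cocircuit_sub_hull_line.
have hsub : E :\: L \subset E :\: (C i :|: C j) :|: [set x i].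
  apply: subset_trans (_ : E :\: (x i |: L) :|: [set x i] \subset _); last first.
    by rewrite setSU // setDS.
  by apply/subsetP => z; rewrite !inE; case: (z == x i); rewrite /= ?orbT ?orbF.
have xiE : [set x i] \subset E by rewrite sub1set (subsetP hull_sub) ?imset_f.
have := rank_mono hM hsub; rewrite subUset subsetDl xiE rank_compl_line => /(_ isT).
by have := rank_setU_card hM (subsetDl E (C i :|: C j)) xiE; rewrite cards1; lia.
Qed.

Lemma card_hull : #|X| = n.
Proof. by rewrite card_imset ?card_ord //; exact: hull_inj. Qed.

Lemma corank_hull_le : r (E :\: X) + n <= r E + 2.
Proof.
have hhull : r (E :\: (L :|: X)) + #|X| <= r E.
  apply: (rank_compl_setU_add_card hM rank_compl_line) => _ /imsetP [i _ ->].
  by exists (C i) => //; rewrite !inE eqxx orbT cocircuit_sub_hull_line.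
have hEX : E :\: X \subset E :\: (L :|: X) :|: L.
  by apply/subsetP => z; rewrite !inE; case: (z \in L); rewrite /= ?orbT ?orbF.
have := rank_mono hM hEX; rewrite subUset subsetDl line_sub => /(_ isT).
have := rank_subadd hM (subsetDl E (L :|: X)) line_sub.
by rewrite card_hull in hhull; rewrite hL; lia.
Qed.

Lemma corank_hull_ge : r E + 2 <= r (E :\: X) + n.
Proof.
have n0 : 0 < n by apply: leq_trans hn.
have n1 : 1 < n by apply: leq_trans hn.
set P := [set x (Ordinal n0); x (Ordinal n1)].
have hPX : P \subset X by rewrite subUset !sub1set !imset_f.
have hXP : X :\: P \subset E := subset_trans (subsetDl X P) hull_sub.
have hPc : #|P| = 2 by rewrite cards2 (inj_eq hull_inj).
have hEP : r (E :\: P) = r E.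
  have hPE := subset_trans hPX hull_sub.
  by rewrite three_connected_rank_compl ?hPc // -hPc (rank_le_card hM hPE).
have hsub : E :\: P \subset E :\: X :|: X :\: P.
  apply/subsetP => z; rewrite in_setU !in_setD.
  by case: (z \in P) => //=; case: (z \in X) => //= ->.
have := rank_mono hM hsub; rewrite subUset subsetDl hXP hEP => /(_ isT).
have := rank_setU_card hM (subsetDl E X) hXP.
by rewrite cardsDS // card_hull hPc; lia.
Qed.

End Carambole.

Theorem proposition4p1 (T : finType) (E : {set T}) (r : {set T} -> nat)
  (n : nat) (x y : 'I_n -> T) :
  is_matroid E r -> three_connected E r -> simple E r -> 4 <= r E ->
  carambole E r x y ->
  dual_rank E r [set x i | i : 'I_n] = 2 /\
  #|[set x i | i : 'I_n]| = #|[set y i | i : 'I_n]|.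
Proof.
move=> hM h3 _ hR [hn [_ hyE] [hL yinj] _ hC].
have hX := card_hull hM h3 hR hn hyE yinj hL hC.
have hle := corank_hull_le hM h3 hR hn hyE yinj hL hC.
have hge := corank_hull_ge hM h3 hR hn hyE yinj hL hC.
split; last by rewrite hX card_line.
by rewrite /dual_rank hX; lia.
Qed.
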